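(* Let $S,Q$ be disjoint finite sets, $\mathcal{M}_{SQ}$ a matroid on $S\uplus Q$, $S',Q'$ disjoint copies of $S,Q$, and $\mathcal{M}_{QQ'}:=\mathcal{M}^*_{SQ}\leftrightarrow(\mathcal{M}_{SQ})_{SQ'}$ (a matroid on $Q\uplus Q'$). Then: 1. $\mathcal{M}^*_{QQ'}=(\mathcal{M}_{QQ'})_{Q'Q}$. 2. $\mathcal{M}_{QQ'}\circ Q=\mathcal{M}^*_{SQ}\circ Q$ and $\mathcal{M}_{QQ'}\times Q=\mathcal{M}^*_{SQ}\times Q$. 3. $(\mathcal{M}_{SQ}\leftrightarrow\mathcal{M}_{QQ'})\circ S=\mathcal{M}_{SQ}\circ S$ and $(\mathcal{M}_{SQ}\leftrightarrow\mathcal{M}_{QQ'})\circ Q'=(\mathcal{M}_{SQ}\circ Q)_{Q'}$. 4. $(\mathcal{M}_{SQ}\leftrightarrow\mathcal{M}_{QQ'})\times S=\mathcal{M}_{SQ}\times S$ and $(\mathcal{M}_{SQ}\leftrightarrow\mathcal{M}_{QQ'})\times Q'=(\mathcal{M}_{SQ}\times Q)_{Q'}$. 5. Every base of $(\mathcal{M}_{SQ})_{SQ'}$ is a base of $\mathcal{M}_{SQ}\leftrightarrow\mathcal{M}_{QQ'}$. 6. The $\{S,Q\}$-completion of $\mathcal{M}_{SQ}$ is the family of bases of the matroid $(\mathcal{M}_{SQ}\leftrightarrow\mathcal{M}_{QQ'})_{SQ}=(\mathcal{M}_{SQ})_{SQ'}\leftrightarrow\big[(\mathcal{M}^*_{SQ})_{S'Q'}\leftrightarrow(\mathcal{M}_{SQ})_{S'Q}\big]$.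 7. The dual of (the matroid whose bases form) the $\{S,Q\}$-completion of $\mathcal{M}_{SQ}$ is (the matroid whose bases form) the $\{S,Q\}$-completion of $\mathcal{M}^*_{SQ}$.
   Context: Matroids are on finite sets, given by their bases; $\mathcal{M}^*$ is the dual. $\mathcal{M}\circ T$ is the restriction (independent sets inside $T$), $\mathcal{M}\times T$ the contraction (bases = minimal sets $b\cap T$, $b$ a base). $\mathbf{0}_X$ has only base $\emptyset$; $\oplus$ is direct sum. For matroids on the same set, $\mathcal{M}_1\vee\mathcal{M}_2$ has as bases the maximal sets $b_1\cup b_2$. For $\mathcal{M}_A$ on $A$, $\mathcal{M}_B$ on $B$: $\mathcal{M}_A\vee\mathcal{M}_B:=(\mathcal{M}_A\oplus\mathbf{0}_{B-A})\vee(\mathcal{M}_B\oplus\mathbf{0}_{A-B})$ and the linking $\mathcal{M}_A\leftrightarrow\mathcal{M}_B:=(\mathcal{M}_A\vee\mathcal{M}_B)\times((A-B)\cup(B-A))$. Copies: if $X'$ is a disjoint copy of $X$ via $e\mapsto e'$, $(\mathcal{M}_{XY})_{X'Y}$ is the matroid obtained by renaming elements of $X$ to their copies; $(\mathcal{M}_{QQ'})_{Q'Q}$ is obtained by interchanging each $e\in Q$ with its copy $e'\in Q'$; $(\mathcal{M}_{SQ}\circ Q)_{Q'}$ is the copy on $Q'$. The $\{S,Q\}$-completion of a matroid $\mathcal{M}_{SQ}$ on $S\uplus Q$ is the family $\mathcal{B}\cup\hat{\mathcal{B}}$, where $\mathcal{B}$ is the set of bases and $\hat{\mathcal{B}}$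 is the set of all $\hat b_S\uplus\hat b_Q$ ($\hat b_S\subseteq S,\hat b_Q\subseteq Q$) that are not bases but for which there exist $b_S\subseteq S$, $b_Q\subseteq Q$ such that $b_S\uplus b_Q$, $\hat b_S\uplus b_Q$, $b_S\uplus\hat b_Q$ are bases. *)

From mathcomp Require Import all_boot.
Set Implicit Arguments. Unset Strict Implicit. Unset Printing Implicit Defensive.

(* A matroid on a finite ground set inside a finite universe U, given by its
   ground set and its family of bases. *)
Record matroid (U : finType) := Matroid { ground : {set U}; bases : {set {set U}} }.

Section Ops.
Variable U : finType.
Implicit Types (M : matroid U) (X : {set U}).

Definition is_matroid M : Prop :=
  [/\ bases M != set0,
      forall b, b \in bases M -> b \subset ground M &
      forall b1 b2, b1 \in bases M -> b2 \in bases M -> forall x, x \in b1 :\: b2 ->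
        exists2 y, y \in b2 :\: b1 & (b1 :\ x) :|: [set y] \in bases M].

Definition indep M (I : {set U}) : bool := [exists b in bases M, I \subset b].

Definition dual M : matroid U := Matroid (ground M) [set ground M :\: b | b in bases M].

Definition restrict M X : matroid U :=
  Matroid (ground M :&: X)
    [set I | maxset (fun J : {set U} => (J \subset X) && indep M J) I].

(* contraction M x X : bases = minimal sets b :&: X, b a base *)
Definition contract M X : matroid U :=
  Matroid (ground M :&: X)
    [set c | minset (fun c' : {set U} => [exists b in bases M, c' == b :&: X]) c].

Definition zero X : matroid U := Matroid X [set set0].

Definition dsum M1 M2 : matroid U :=
  Matroid (ground M1 :|: ground M2)
    [set b1 :|: b2 | b1 in bases M1, b2 in bases M2].

Definition union M1 M2 : matroid U :=
  Matroid (ground M1 :|: ground M2)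
    [set c | maxset (fun c' : {set U} =>
        [exists b1 in bases M1, exists b2 in bases M2, c' == b1 :|: b2]) c].

(* M_A \/ M_B for matroids on possibly different sets A, B *)
Definition vee MA MB : matroid U :=
  union (dsum MA (zero (ground MB :\: ground MA)))
        (dsum MB (zero (ground MA :\: ground MB))).

Definition link MA MB : matroid U :=
  contract (vee MA MB)
    ((ground MA :\: ground MB) :|: (ground MB :\: ground MA)).

Definition rename (f : U -> U) M : matroid U :=
  Matroid (f @: ground M) [set f @: b | b : {set U} in bases M].

Definition completion M (S Q : {set U}) : {set {set U}} :=
  bases M :|:
  [set c | [exists hS : {set U}, exists hQ : {set U}, exists bS : {set U}, exists bQ : {set U},
     [&& hS \subset S, hQ \subset Q, bS \subset S, bQ \subset Q,
         c == hS :|: hQ, c \notin bases M,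
         bS :|: bQ \in bases M, hS :|: bQ \in bases M & bS :|: hQ \in bases M]]].

End Ops.

(* Copies: the universe is T * bool; x : T is represented by (x, false) and its
   copy x' by (x, true). *)
Section Copies.
Variable T : finType.

Definition orig (x : T) : T * bool := (x, false).
Definition copy (x : T) : T * bool := (x, true).

Definition toggle (X : {set T}) (u : T * bool) : T * bool :=
  if u.1 \in X then (u.1, ~~ u.2) else u.

End Copies.

Definition embed_orig (T : finType) (M : matroid T) : matroid (T * bool)%type :=
  Matroid ((@orig T) @: ground M) [set (@orig T) @: b | b : {set T} in bases M].

(* Write a subset of S + Q + S' + Q' by its part A among the originals and its
   part B among the copies, as [setOC A B].  The bases of M_QQ' are the sets [setOC (Q :\: b1) (b2 :&: Q)]
   with b1 and b2 agreeing on S, and those of M_SQ <-> M_QQ' are the sets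
   [setOC (b :&: S) (b2 :&: Q)] such that (b2 :&: S) :|: (b :&: Q) is again a
   base: up to moving Q' back to Q, this is the {S,Q}-completion.  Each linking
   is computed in two steps.  In the union, a pair of bases that meet can be
   exchanged into a strictly larger union, so the maximal unions are the
   disjoint ones.  In the contraction, the minimal traces are singled out by
   cardinality, and a non-minimal trace is shrunk by (co)exchange.  Item 7 holds for any family of bases:
   complementation in S + Q maps the completion of M to that of its dual. *)

From mathcomp Require Import all_boot zify.
Set Implicit Arguments. Unset Strict Implicit. Unset Printing Implicit Defensive.

Section BaseExchange.
Variables (V : finType) (N : matroid V).
Hypothesis matroidN : is_matroid N.
Local Notation B := (bases N).

Lemma base_exchange b1 b2 x : b1 \in B -> b2 \in B -> x \in b1 :\: b2 ->
  exists2 y, y \in b2 :\: b1 & (b1 :\ x) :|: [set y] \in B.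
Proof. by case: matroidN => _ _ exch h1 h2; exact: exch. Qed.

Lemma base_subset_eq b b' : b \in B -> b' \in B -> b \subset b' -> b = b'.
Proof.
move=> hb hb' sbb'; apply/eqP; rewrite eqEsubset sbb' /=; apply/subsetP => z zb'.
apply/negPn/negP => zb; have [|y] := base_exchange hb' hb (x := z); first by rewrite inE zb.
by rewrite inE => /andP[/negP yb' /(subsetP sbb')].
Qed.

Lemma card_bases b1 b2 : b1 \in B -> b2 \in B -> #|b1| = #|b2|.
Proof.
move=> h1 h2; have [n] := ubnP #|b1 :\: b2|; elim: n b1 h1 => // n IH b1 h1 hn.
have [e|[x hx]] := set_0Vmem (b1 :\: b2).
  by rewrite (@base_subset_eq b1 b2) // -setD_eq0 e.
have [y hy hb] := base_exchange h1 h2 hx.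
move: hx hy; rewrite !inE => /andP[xb2 xb1] /andP[yb1 yb2].
have card_swap : #|(b1 :\ x) :|: [set y]| = #|b1|.
  by rewrite setUC cardsU1 !inE negb_and yb1 orbT (cardsD1 x b1) xb1.
rewrite -card_swap; apply: IH => //; rewrite -ltnS (leq_trans _ hn) // ltnS.
apply: proper_card; apply/properP; split.
  apply/subsetP => z; rewrite !inE => /andP[zb2 /orP[/andP[_ ->]|/eqP zy]]; first by rewrite zb2.
  by rewrite zy yb2 in zb2.
by exists x; rewrite !inE ?eqxx ?xb1 ?xb2 //=; apply: contraNneq yb1 => <-.
Qed.

(* Induction on #|b1 :\: b|: exchanging an element z <> x of b1 :\: b moves b1
   towards b; once x is alone in b1 :\: b, exchanging it turns b1 into b. *)
Lemma base_coexchange b b1 x : b \in B -> b1 \in B -> x \in b1 :\: b ->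
  exists2 y, y \in b :\: b1 & (b :\ y) :|: [set x] \in B.
Proof.
move=> hb; have [n] := ubnP #|b1 :\: b|; elim: n b1 => // n IH b1 hn h1 hx.
have [/existsP[z /andP[hz zx]]|/existsPn b1_sub] := boolP [exists z in b1 :\: b, z != x].
  have [w hw h1'] := base_exchange h1 hb hz.
  move: hz hw hx; rewrite !inE => /andP[zb zb1] /andP[wb1 wb] /andP[xb xb1].
  have [||y] := IH ((b1 :\ z) :|: [set w]) _ h1'.
  - rewrite -ltnS (leq_trans _ hn) // ltnS; apply: proper_card; apply/properP; split.
      apply/subsetP => u; rewrite !inE => /andP[ub /orP[/andP[_ ->]|/eqP uw]]; first by rewrite ub.
      by rewrite uw wb in ub.
    by exists z; rewrite !inE ?zb ?zb1 ?eqxx //=; apply: contraNneq wb1 => <-.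
  - by rewrite !inE xb xb1 eq_sym zx.
  rewrite !inE negb_or => /andP[/andP[y_nin _] yb] hy; exists y => //.
  rewrite !inE yb andbT; apply: contra y_nin => yb1; rewrite yb1 andbT.
  by apply: contraNneq zb => <-.
have [y hy hb1'] := base_exchange h1 hb hx.
have def_b : (b1 :\ x) :|: [set y] = b.
  apply: base_subset_eq => //; apply/subsetP => u; rewrite !inE => /orP[/andP[ux ub1]|/eqP->].
    by apply/negPn/negP => ub; have := b1_sub u; rewrite !inE ub ub1 ux.
  by case/setDP: hy.
exists y => //; suff -> : (b :\ y) :|: [set x] = b1 by [].
have [xb1 yb1] : x \in b1 /\ y \notin b1 by move: hx hy; rewrite !inE => /andP[_ ->] /andP[->].
rewrite -def_b; apply/setP => u; rewrite !inE.
case: (eqVneq u x) => [->|ux]; first by rewrite orbT.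
by case: (eqVneq u y) => [->|uy] /=; rewrite ?(negbTE ux) ?(negbTE yb1) ?orbF.
Qed.

End BaseExchange.

Section SetFamilies.
Variable V : finType.
Implicit Types (P Good : pred {set V}) (FA FB : {set {set V}}) (X Y : {set V}).

Lemma maxset_by_card P Good :
  (forall X, Good X -> P X) ->
  (forall X, P X -> ~~ Good X -> exists2 Y, P Y & X \proper Y) ->
  (forall X Y, Good X -> P Y -> #|Y| <= #|X|) ->
  maxset P =1 Good.
Proof.
move=> goodP grow card_max X; apply/maxsetP/idP => [[PX maxX]|goodX].
  apply/negPn/negP => /(grow X PX)[Y PY ltXY].
  by have eYX := maxX Y PY (proper_sub ltXY); rewrite eYX properxx in ltXY.
split=> [|Y PY sXY]; first exact: goodP.
by apply/eqP; rewrite eq_sym eqEcard sXY card_max.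
Qed.

Lemma minset_by_card P Good :
  (forall X, Good X -> P X) ->
  (forall X, P X -> ~~ Good X -> exists2 Y, P Y & Y \proper X) ->
  (forall X Y, Good X -> P Y -> #|X| <= #|Y|) ->
  minset P =1 Good.
Proof.
move=> goodP shrink card_min X; apply/minsetP/idP => [[PX minX]|goodX].
  apply/negPn/negP => /(shrink X PX)[Y PY ltYX].
  by have eYX := minX Y PY (proper_sub ltYX); rewrite eYX properxx in ltYX.
split=> [|Y PY sYX]; first exact: goodP.
by apply/eqP; rewrite eqEcard sYX card_min.
Qed.

Lemma disjoint_andF (A B : {set V}) : [disjoint A & B] -> forall z, (z \in A) && (z \in B) = false.
Proof. by move=> disjAB z; apply/andP => -[zA zB]; rewrite (disjointFr disjAB zA) in zB. Qed.

Lemma subset_imply (A B : {set V}) z : A \subset B -> (z \in A) ==> (z \in B).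
Proof. by move/subsetP=> sAB; apply/implyP => /sAB. Qed.

Lemma disjoint_setD X Y (Z : {set V}) : [disjoint X & Y :\: Z] = (X :&: Y \subset Z).
Proof. by rewrite -setI_eq0 setIDA setD_eq0. Qed.

Definition unions FA FB := [set a :|: b | a in FA, b in FB].
Definition disjoint_unions FA FB := [set a :|: b | a in FA, b in FB & [disjoint a & b]].

Lemma maxset_unions FA FB :
  {in FA &, forall a a' : {set V}, #|a| = #|a'|} ->
  {in FB &, forall b b' : {set V}, #|b| = #|b'|} ->
  {in FA & FB, forall a b : {set V}, ~~ [disjoint a & b] ->
     exists2 c, c \in unions FA FB & a :|: b \proper c} ->
  maxset (pred_of_set (unions FA FB)) =1 pred_of_set (disjoint_unions FA FB).
Proof.
move=> cardA cardB grow; apply: maxset_by_card => X.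
- case/imset2P=> a b ha; rewrite inE => /andP[hb _] ->; exact: imset2_f.
- case/imset2P=> a b ha hb -> not_disj; apply: grow => //.
  by apply: contra not_disj => disj; apply: imset2_f; rewrite // inE hb.
- move=> Y /imset2P[a b ha]; rewrite inE -setI_eq0 => /andP[hb /eqP ab0] ->.
  case/imset2P=> a' b' ha' hb' ->.
  by rewrite cardsU (cardsU a) ab0 cards0 subn0 (cardA a' a) // (cardB b' b) // leq_subr.
Qed.

End SetFamilies.

Section Operations.
Variable V : finType.
Implicit Types (N MA MB : matroid V) (X J : {set V}).

Lemma matroid_eq N1 N2 : ground N1 = ground N2 -> bases N1 = bases N2 -> N1 = N2.
Proof. by case: N1 N2 => [g1 b1] [g2 b2] /= -> ->. Qed.

Lemma dsum_zero_bases N X : bases (dsum N (zero X)) = bases N.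
Proof.
apply/setP => c; apply/imset2P/idP => [[b _ hb /set1P-> ->]|hc]; first by rewrite setU0.
by exists c set0; rewrite ?inE ?setU0.
Qed.

Lemma vee_ground MA MB : ground (vee MA MB) = ground MA :|: ground MB.
Proof. by apply/setP => u; rewrite !inE; case: (u \in ground MA); case: (u \in ground MB). Qed.

Lemma vee_bases MA MB :
  bases (vee MA MB) = [set c | maxset (pred_of_set (unions (bases MA) (bases MB))) c].
Proof.
rewrite /vee /union; cbn [bases]; rewrite !dsum_zero_bases.
apply/setP => c; rewrite !inE; apply: maxset_eq => d; apply/existsP/imset2P.
  by case=> a /andP[ha /existsP[b /andP[hb /eqP->]]]; exists a b.
by case=> a b ha hb ->; exists a; rewrite ha; apply/existsP; exists b; rewrite hb eqxx.
Qed.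

Lemma link_ground MA MB :
  ground (link MA MB) = (ground MA :\: ground MB) :|: (ground MB :\: ground MA).
Proof.
rewrite /link /contract; cbn [ground]; rewrite vee_ground; apply/setP => u; rewrite !inE.
by case: (u \in ground MA); case: (u \in ground MB).
Qed.

Definition traces N X := [set b :&: X | b in bases N].

Lemma contract_bases N X : bases (contract N X) = [set c | minset (pred_of_set (traces N X)) c].
Proof.
apply/setP => c; rewrite !inE; apply: minset_eq => d; apply/existsP/imsetP.
  by case=> b /andP[hb /eqP->]; exists b.
by case=> b hb ->; exists b; rewrite hb eqxx.
Qed.

Lemma link_bases MA MB : bases (link MA MB) =
  [set c | minset (pred_of_set
    (traces (vee MA MB) ((ground MA :\: ground MB) :|: (ground MB :\: ground MA)))) c].
Proof. exact: contract_bases. Qed.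

Lemma indep_traces N X J : J \subset X -> indep N J = [exists t in traces N X, J \subset t].
Proof.
move=> sJX; apply/existsP/existsP => [[b /andP[hb sJb]]|[_ /andP[/imsetP[b hb ->] sJb]]].
  by exists (b :&: X); rewrite (imset_f (fun b => b :&: X)) //= subsetI sJb.
by exists b; rewrite hb (subset_trans sJb) ?subsetIl.
Qed.

Lemma eq_minors N1 N2 X : ground N1 :&: X = ground N2 :&: X -> traces N1 X = traces N2 X ->
  restrict N1 X = restrict N2 X /\ contract N1 X = contract N2 X.
Proof.
move=> eq_ground eq_traces; split; apply: matroid_eq; rewrite ?contract_bases ?eq_traces //=.
apply/setP => c; rewrite !inE; apply: maxset_eq => J.
by case: (boolP (J \subset X)) => //= sJX; rewrite !(indep_traces _ sJX) eq_traces.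
Qed.

Lemma dual_ground N : ground (dual N) = ground N.
Proof. by []. Qed.

Lemma dual_bases N : bases (dual N) = [set ground N :\: b | b in bases N].
Proof. by []. Qed.

Lemma rename_ground (f : V -> V) N : ground (rename f N) = f @: ground N.
Proof. by []. Qed.

Lemma rename_bases (f : V -> V) N : bases (rename f N) = [set f @: b | b : {set V} in bases N].
Proof. by []. Qed.

Lemma rename_comp (f g : V -> V) N : rename f (rename g N) = rename (f \o g) N.
Proof.
apply: matroid_eq; first by rewrite /= imset_comp.
by rewrite /= -imset_comp; apply: eq_imset => b /=; rewrite imset_comp.
Qed.

Lemma eq_rename (f g : V -> V) N : f =1 g -> rename f N = rename g N.
Proof.
move=> efg; apply: matroid_eq; first exact: eq_imset.
by apply: eq_imset => b; apply: eq_imset.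
Qed.

Lemma eq_in_rename (f g : V -> V) N :
  {in ground N, f =1 g} -> (forall b, b \in bases N -> b \subset ground N) ->
  rename f N = rename g N.
Proof.
move=> efg sub_ground; apply: matroid_eq; first exact: eq_in_imset.
apply: eq_in_imset => b /sub_ground sbG; apply: eq_in_imset => u ub.
exact: efg (subsetP sbG u ub).
Qed.

End Operations.

Section InvolutiveRenaming.
Variables (V : finType) (f : V -> V).
Hypothesis fK : involutive f.
Implicit Types (N MA MB : matroid V) (A B X J : {set V}) (F FA FB : {set {set V}}).
Local Notation fimage F := [set f @: b | b : {set V} in F].

Lemma imsetK A : f @: (f @: A) = A.
Proof. by rewrite -imset_comp (eq_imset _ fK) imset_id. Qed.

Lemma imsetI_inv A B : f @: (A :&: B) = f @: A :&: f @: B.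
Proof. by rewrite !(can_imset_pre _ fK) preimsetI. Qed.

Lemma imsetD_inv A B : f @: (A :\: B) = f @: A :\: f @: B.
Proof. by rewrite !(can_imset_pre _ fK) preimsetD. Qed.

Lemma imsetS_inv A B : (f @: A \subset B) = (A \subset f @: B).
Proof. by apply/idP/idP => /(imsetS f); rewrite imsetK. Qed.

Lemma mem_fimage F A : (A \in fimage F) = (f @: A \in F).
Proof.
by apply/imsetP/idP => [[B hB ->]|hA]; [rewrite imsetK | exists (f @: A); rewrite ?imsetK].
Qed.

Lemma fimage_set (P : pred {set V}) : fimage [set A | P A] = [set A : {set V} | P (f @: A)].
Proof. by apply/setP => A; rewrite mem_fimage !inE. Qed.

Lemma maxset_imset P A : maxset P (f @: A) = maxset (fun B => P (f @: B)) A.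
Proof.
apply/maxsetP/maxsetP => [[PfA maxfA]|[PfA maxA]]; split=> // B PB sAB.
  by rewrite -[B]imsetK (maxfA _ PB (imsetS f sAB)) imsetK.
by rewrite -(maxA (f @: B)) ?imsetK // -imsetS_inv.
Qed.

Lemma minset_imset P A : minset P (f @: A) = minset (fun B => P (f @: B)) A.
Proof.
apply/minsetP/minsetP => [[PfA minfA]|[PfA minA]]; split=> // B PB sBA.
  by rewrite -[B]imsetK (minfA _ PB (imsetS f sBA)) imsetK.
by rewrite -(minA (f @: B)) ?imsetK // imsetS_inv.
Qed.

Lemma fimage_unions FA FB : fimage (unions FA FB) = unions (fimage FA) (fimage FB).
Proof.
apply/setP => c; rewrite mem_fimage; apply/imset2P/imset2P => [[a b ha hb ec]|[a b]].
  by exists (f @: a) (f @: b); rewrite ?mem_fimage ?imsetK // -imsetU -ec imsetK.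
by rewrite !mem_fimage => ha hb ->; exists (f @: a) (f @: b); rewrite // imsetU.
Qed.

Lemma traces_rename N X : traces (rename f N) (f @: X) = fimage (traces N X).
Proof.
apply/setP => c; rewrite mem_fimage; apply/imsetP/imsetP => [[_ /imsetP[b hb ->] ->]|[b hb ec]].
  by exists b; rewrite // -imsetI_inv imsetK.
by exists (f @: b); rewrite ?imset_f // -imsetI_inv -ec imsetK.
Qed.

Lemma indep_rename N J : indep (rename f N) J = indep N (f @: J).
Proof.
apply/existsP/existsP => [[_ /andP[/imsetP[b hb ->] sJb]]|[b /andP[hb sJb]]].
  by exists b; rewrite hb imsetS_inv.
by exists (f @: b); rewrite imset_f //= -imsetS_inv.
Qed.

Lemma rename_vee MA MB : rename f (vee MA MB) = vee (rename f MA) (rename f MB).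
Proof.
apply: matroid_eq; first by rewrite rename_ground !vee_ground imsetU.
rewrite rename_bases !vee_bases fimage_set; apply/setP => c; rewrite !inE maxset_imset.
by apply: maxset_eq => d; rewrite !rename_bases -fimage_unions; exact: esym (mem_fimage _ _).
Qed.

Lemma rename_contract N X : rename f (contract N X) = contract (rename f N) (f @: X).
Proof.
apply: matroid_eq; first by rewrite rename_ground /= imsetI_inv.
rewrite rename_bases !contract_bases fimage_set traces_rename.
by apply/setP => c; rewrite !inE minset_imset; apply: minset_eq => d; exact: esym (mem_fimage _ _).
Qed.

Lemma rename_link MA MB : rename f (link MA MB) = link (rename f MA) (rename f MB).
Proof. by rewrite /link rename_contract rename_vee !rename_ground imsetU !imsetD_inv. Qed.

Lemma rename_restrict N X : rename f (restrict N X) = restrict (rename f N) (f @: X).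
Proof.
apply: matroid_eq; first by rewrite rename_ground /= imsetI_inv.
rewrite rename_bases /= fimage_set; apply/setP => c; rewrite !inE maxset_imset.
by apply: maxset_eq => J; rewrite indep_rename imsetS_inv.
Qed.

End InvolutiveRenaming.

Section OrigCopy.
Variable T : finType.
Implicit Types (A B C D X : {set T}) (Z : {set T * bool}).

Definition setOC A B : {set T * bool} := [set u | if u.2 then u.1 \in B else u.1 \in A].

Lemma in_setOC A B x c : ((x, c) \in setOC A B) = if c then x \in B else x \in A.
Proof. by rewrite inE. Qed.

Lemma setOC_orig A : (@orig T) @: A = setOC A set0.
Proof.
apply/setP => -[x c]; rewrite in_setOC inE; apply/imsetP/idP => [[y hy [-> ->]] //|].
by case: c => //= hx; exists x.
Qed.

Lemma setOC_copy A : (@copy T) @: A = setOC set0 A.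
Proof.
apply/setP => -[x c]; rewrite in_setOC inE; apply/imsetP/idP => [[y hy [-> ->]] //|].
by case: c => //= hx; exists x.
Qed.

Lemma setOC_split Z : Z = setOC [set x | (x, false) \in Z] [set x | (x, true) \in Z].
Proof. by apply/setP => -[x []]; rewrite in_setOC inE. Qed.

Lemma setOC_inj A B C D : setOC A B = setOC C D -> A = C /\ B = D.
Proof.
by move/setP=> eq_OC; split; apply/setP => x; [move: (eq_OC (x, false)) | move: (eq_OC (x, true))];
  rewrite !in_setOC.
Qed.

Lemma subset_setOC A B C D : (setOC A B \subset setOC C D) = (A \subset C) && (B \subset D).
Proof.
apply/subsetP/andP => [sub|[/subsetP sAC /subsetP sBD] [x []]]; rewrite ?in_setOC //;
  [|exact: sBD|exact: sAC].
by split; apply/subsetP => x; [move: (sub (x, false)) | move: (sub (x, true))]; rewrite !in_setOC.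
Qed.

Lemma eq_setOC A B C D : A =i C -> B =i D -> setOC A B = setOC C D.
Proof. by move=> /setP-> /setP->. Qed.

Lemma setOCU A B C D : setOC A B :|: setOC C D = setOC (A :|: C) (B :|: D).
Proof. by apply/setP => -[x []]; rewrite !inE. Qed.

Lemma setOCI A B C D : setOC A B :&: setOC C D = setOC (A :&: C) (B :&: D).
Proof. by apply/setP => -[x []]; rewrite !inE. Qed.

Lemma setOCD A B C D : setOC A B :\: setOC C D = setOC (A :\: C) (B :\: D).
Proof. by apply/setP => -[x []]; rewrite !inE. Qed.

Lemma subset_setOC_orig Z A :
  Z \subset setOC A set0 -> exists2 Z0 : {set T}, Z0 \subset A & Z = setOC Z0 set0.
Proof.
rewrite [Z]setOC_split subset_setOC subset0 => /andP[sZA /eqP->].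
by exists [set x | (x, false) \in Z].
Qed.

Lemma setOC_eq0 A B : (setOC A B == set0) = (A == set0) && (B == set0).
Proof.
have setOC0 : setOC set0 set0 = set0 :> {set T * bool} by apply/setP => -[x []]; rewrite !inE.
by rewrite -!subset0 -setOC0 subset_setOC.
Qed.

Lemma disjoint_setOC A B C D :
  [disjoint setOC A B & setOC C D] = [disjoint A & C] && [disjoint B & D].
Proof. by rewrite -!setI_eq0 setOCI setOC_eq0. Qed.

Lemma disjoint_setOC_orig A C D : [disjoint setOC A set0 & setOC C D] = [disjoint A & C].
Proof. by rewrite disjoint_setOC -(setI_eq0 set0) set0I eqxx andbT. Qed.

Lemma card_setOC A B : #|setOC A B| = #|A| + #|B|.
Proof.
have -> : setOC A B = setOC A set0 :|: setOC set0 B by rewrite setOCU setU0 set0U.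
rewrite cardsU setOCI setI0 set0I.
have -> : setOC set0 set0 = set0 :> {set T * bool} by apply/setP => -[x []]; rewrite !inE.
by rewrite cards0 subn0 -setOC_orig -setOC_copy !card_imset // => x y [].
Qed.

Lemma toggleK X : involutive (toggle X).
Proof. by case=> x c; rewrite /toggle /=; case hx: (x \in X); rewrite /= ?hx ?negbK. Qed.

Lemma toggle_setOC X A B :
  toggle X @: setOC A B = setOC ((A :\: X) :|: (B :&: X)) ((B :\: X) :|: (A :&: X)).
Proof.
rewrite (can_imset_pre _ (toggleK X)); apply/setP => -[x c]; rewrite !inE /toggle /=.
by case: (x \in X); case: c; rewrite /= ?andbT ?andbF ?orbF.
Qed.

End OrigCopy.

(* Closes a boolean set-membership goal by case analysis on all its atoms
   [x == y] and [x \in A]; the facts it needs must be moved into the goal. *)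
Ltac case_mem :=
  try done; match goal with |- context [?a \in ?A] => case: (a \in A) => /=; case_mem end.
Ltac set_tauto :=
  rewrite ?inE ?eqxx /=;
  repeat match goal with |- context [?a == ?b] => case: (eqVneq a b) => [->|?] end;
  rewrite ?inE; case_mem.

Section Linking.
Variables (T : finType) (S Q : {set T}) (M : matroid T).
Hypotheses (disjSQ : [disjoint S & Q]) (groundM : ground M = S :|: Q) (matroidM : is_matroid M).
Local Notation BM := (bases M).
Local Notation G := (S :|: Q).
Local Notation MSQ := (embed_orig M).
Local Notation MSQ' := (rename (toggle Q) MSQ).
Local Notation MQQ' := (link (dual MSQ) MSQ').
Local Notation L := (link MSQ MQQ').

Local Notation notSQ := (disjoint_andF disjSQ).

Lemma base_sub b : b \in BM -> b \subset G.
Proof. by case: matroidM => _ sub _ /sub; rewrite groundM. Qed.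

Lemma base_memSQ b z : b \in BM -> (z \in b) ==> (z \in S) || (z \in Q).
Proof. by move=> /base_sub /subsetP sbG; apply/implyP => /sbG; rewrite inE. Qed.

Lemma card_baseSQ b : b \in BM -> #|b :&: S| + #|b :&: Q| = #|b|.
Proof.
move=> hb; rewrite -(cardsID S b); congr (_ + _).
by apply: eq_card => z; move: (notSQ z) (base_memSQ z hb); set_tauto.
Qed.

Lemma card_QD b : #|Q :\: b| + #|b :&: Q| = #|Q|.
Proof. by rewrite -(cardsID b Q) setIC addnC. Qed.

Lemma card_GD b : b \in BM -> #|G :\: b| + #|b| = #|G|.
Proof. by move=> hb; rewrite -(cardsID b G) setIC (setIidPl (base_sub hb)) addnC. Qed.

Lemma base_splitSQ b : b \in BM -> (b :&: S) :|: (b :&: Q) = b.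
Proof. by move=> hb; apply/setP => z; move: (base_memSQ z hb); set_tauto. Qed.

Lemma ground_MSQ : ground MSQ = setOC G set0.
Proof. by rewrite /= groundM setOC_orig. Qed.

Lemma bases_MSQ : bases MSQ = [set setOC b set0 | b in BM].
Proof. by apply: eq_imset => b; rewrite setOC_orig. Qed.

Lemma ground_MSQ' : ground MSQ' = setOC S Q.
Proof.
by rewrite rename_ground ground_MSQ toggle_setOC; apply: eq_setOC => z; move: (notSQ z); set_tauto.
Qed.

Lemma bases_MSQ' : bases MSQ' = [set setOC (b :&: S) (b :&: Q) | b in BM].
Proof.
rewrite rename_bases bases_MSQ -imset_comp; apply: eq_in_imset => b hb /=.
by rewrite toggle_setOC; apply: eq_setOC => z; move: (notSQ z) (base_memSQ z hb); set_tauto.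
Qed.

Lemma mem_bases_MSQ A : (setOC A set0 \in bases MSQ) = (A \in BM).
Proof.
rewrite bases_MSQ; apply/imsetP/idP => [[b hb /setOC_inj[-> _]] //|hA].
by exists A.
Qed.

Lemma bases_dual_MSQ : bases (dual MSQ) = [set setOC (G :\: b) set0 | b in BM].
Proof.
rewrite dual_bases ground_MSQ bases_MSQ -imset_comp.
by apply: eq_imset => b /=; rewrite setOCD setD0.
Qed.

Lemma vee_dual_MSQ' :
  bases (vee (dual MSQ) MSQ') = disjoint_unions (bases (dual MSQ)) (bases MSQ').
Proof.
rewrite vee_bases; apply/setP => c; rewrite inE; apply: maxset_unions.
- rewrite bases_dual_MSQ => _ _ /imsetP[b hb ->] /imsetP[b' hb' ->].
  rewrite !card_setOC !cards0 !addn0.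
  by have := card_GD hb; have := card_GD hb'; have := card_bases matroidM hb hb'; lia.
- rewrite bases_MSQ' => _ _ /imsetP[b hb ->] /imsetP[b' hb' ->].
  by rewrite !card_setOC !card_baseSQ //; move: (card_bases matroidM hb hb').
- rewrite bases_dual_MSQ bases_MSQ' => _ _ /imsetP[b1 h1 ->] /imsetP[b2 h2 ->].
  case/pred0Pn => -[x []] /=; rewrite !in_setOC ?in_set0 // => /andP[xGb1 xb2S].
  have hx : x \in b2 :\: b1 by move: xGb1 xb2S; set_tauto.
  have [y hy h2'] := base_exchange matroidM h2 h1 hx.
  set b2' := (b2 :\ x) :|: [set y].
  exists (setOC (G :\: b1) set0 :|: setOC (b2' :&: S) (b2' :&: Q)).
    by apply: imset2_f; apply: imset_f.
  apply/properP; split.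
    rewrite !setOCU subset_setOC; apply/andP; split; apply/subsetP => z;
      by move: (notSQ x) xGb1 xb2S; set_tauto.
  move: hy; rewrite inE => /andP[yb2 yb1].
  have /orP[yS|yQ] := implyP (base_memSQ y h1) yb1; [exists (y, false) | exists (y, true)];
    by move: (notSQ y) yb1 yb2; rewrite !inE ?yS ?yQ; set_tauto.
Qed.

Lemma traces_vee_dual_MSQ' : traces (vee (dual MSQ) MSQ') (setOC Q Q) =
  [set setOC (Q :\: b1) (b2 :&: Q) | b1 in BM, b2 in BM & b2 :&: S \subset b1].
Proof.
have disjE b1 b2 : [disjoint G :\: b1 & b2 :&: S] = (b2 :&: S \subset b1).
  by rewrite disjoint_sym disjoint_setD -setIA (setIidPl (subsetUl S Q)).
rewrite /traces vee_dual_MSQ' bases_dual_MSQ bases_MSQ'; apply/setP => X.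
apply/imsetP/imset2P => [[_ /imset2P[_ d /imsetP[b1 h1 ->] + ->] ->]|[b1 b2 h1]].
  rewrite inE => /andP[/imsetP[b2 h2 ->]]; rewrite disjoint_setOC_orig disjE => sb.
  exists b1 b2; rewrite ?inE ?h2 //= setOCU setOCI.
  by apply: eq_setOC => z; move: (notSQ z) (base_memSQ z h1); set_tauto.
rewrite inE => /andP[h2 sb] ->.
exists (setOC (G :\: b1) set0 :|: setOC (b2 :&: S) (b2 :&: Q)).
  apply: imset2_f; first exact: imset_f.
  by rewrite inE disjoint_setOC_orig disjE sb andbT; apply/imsetP; exists b2.
by rewrite setOCU setOCI; apply: eq_setOC => z; move: (notSQ z) (base_memSQ z h1); set_tauto.
Qed.

Lemma ground_MQQ' : ground MQQ' = setOC Q Q.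
Proof.
rewrite link_ground ground_MSQ' dual_ground ground_MSQ !setOCD setOCU.
by apply: eq_setOC => z; move: (notSQ z); set_tauto.
Qed.

Lemma bases_MQQ' : bases MQQ' =
  [set setOC (Q :\: b1) (b2 :&: Q) | b1 in BM, b2 in BM & b1 :&: S == b2 :&: S].
Proof.
rewrite link_bases -link_ground ground_MQQ' traces_vee_dual_MSQ'; apply/setP => X; rewrite inE.
apply: minset_by_card => {}X.
- case/imset2P=> b1 b2 h1; rewrite inE => /andP[h2 /eqP eqS] ->.
  by apply: imset2_f; rewrite // inE h2 -eqS subsetIl.
- case/imset2P=> b1 b2 h1; rewrite inE => /andP[h2 sb] -> not_good.
  have : ~~ (b1 :&: S \subset b2).
    apply: contra not_good => sb'; apply: imset2_f => //.
    by rewrite inE h2 eqEsubset !subsetI sb sb' !subsetIr.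
  case/subsetPn => x; rewrite inE => /andP[xb1 xS] xb2.
  have [|y] := base_exchange matroidM h1 h2 (x := x); first by rewrite inE xb1 xb2.
  rewrite inE => /andP[yb1 yb2] h1'.
  have yQ : y \in Q.
    have := implyP (base_memSQ y h2) yb2.
    by move: (subset_imply y sb) yb1 yb2; set_tauto.
  exists (setOC (Q :\: ((b1 :\ x) :|: [set y])) (b2 :&: Q)).
    apply: imset2_f => //; rewrite inE h2 /=.
    by apply/subsetP => z; move: (subset_imply z sb) xb2; set_tauto.
  apply/properP; split.
    by rewrite subset_setOC subxx andbT; apply/subsetP => z; move: (notSQ x) xS; set_tauto.
  by exists (y, false); rewrite !in_setOC; move: yQ yb1; set_tauto.
- move=> Y /imset2P[b1 b2 h1]; rewrite inE => /andP[h2 /eqP eqS] ->.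
  case/imset2P=> a1 a2 g1; rewrite inE => /andP[g2 sa] ->.
  have : #|a2 :&: S| <= #|a1 :&: S| by apply: subset_leq_card; rewrite subsetI sa subsetIr.
  have := card_QD b1; have := card_QD a1.
  have := card_baseSQ h1; have := card_baseSQ h2; have := card_baseSQ g1; have := card_baseSQ g2.
  have := card_bases matroidM h1 h2; have := card_bases matroidM h1 g1.
  have := card_bases matroidM h1 g2.
  by rewrite !card_setOC eqS; lia.
Qed.

Lemma vee_MSQ_MQQ' : bases (vee MSQ MQQ') = disjoint_unions (bases MSQ) (bases MQQ').
Proof.
rewrite vee_bases; apply/setP => c; rewrite inE; apply: maxset_unions.
- rewrite bases_MSQ => _ _ /imsetP[b hb ->] /imsetP[b' hb' ->].
  by rewrite !card_setOC !cards0 !addn0; move: (card_bases matroidM hb hb').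
- rewrite bases_MQQ' => _ _ /imset2P[b1 b2 h1 hb2 ->] /imset2P[a1 a2 g1 ha2 ->].
  move: hb2 ha2; rewrite !inE => /andP[h2 /eqP eqSb] /andP[g2 /eqP eqSa].
  have := card_QD b1; have := card_QD a1.
  have := card_baseSQ h1; have := card_baseSQ h2; have := card_baseSQ g1; have := card_baseSQ g2.
  have := card_bases matroidM h1 h2; have := card_bases matroidM g1 g2.
  by rewrite !card_setOC eqSa eqSb; lia.
- rewrite bases_MSQ bases_MQQ' => _ _ /imsetP[b hb ->] /imset2P[b1 b2 h1 hb2 ->].
  move: hb2; rewrite inE => /andP[h2 /eqP eqS].
  case/pred0Pn => -[x []] /=; rewrite !in_setOC ?in_set0 // => /andP[xb xQb1].
  have hx : x \in b :\: b1 by move: xQb1 xb; set_tauto.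
  have [y hy hb'] := base_exchange matroidM hb h1 hx.
  exists (setOC ((b :\ x) :|: [set y]) set0 :|: setOC (Q :\: b1) (b2 :&: Q)).
    apply/imset2P; exists (setOC ((b :\ x) :|: [set y]) set0) (setOC (Q :\: b1) (b2 :&: Q)) => //.
      by apply/imsetP; exists ((b :\ x) :|: [set y]).
    by apply/imset2P; exists b1 b2; rewrite // inE h2 eqS /=.
  apply/properP; split.
    by rewrite !setOCU subset_setOC subxx andbT; apply/subsetP => z; move: xQb1; set_tauto.
  by exists (y, false); move: hy; set_tauto.
Qed.

Lemma traces_vee_MSQ_MQQ'P X : reflect
  (exists b b1 b2, [/\ [&& b \in BM, b1 \in BM & b2 \in BM], b1 :&: S = b2 :&: S,
                      b :&: Q \subset b1 & X = setOC (b :&: S) (b2 :&: Q)])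
  (X \in traces (vee MSQ MQQ') (setOC S Q)).
Proof.
rewrite /traces vee_MSQ_MQQ' bases_MSQ bases_MQQ'; apply: (iffP imsetP).
  case=> _ /imset2P[_ d /imsetP[b hb ->] + ->] ->.
  rewrite inE => /andP[/imset2P[b1 b2 h1 + ->]]; rewrite inE => /andP[h2 /eqP eqS].
  rewrite disjoint_setOC_orig disjoint_setD => sb.
  exists b, b1, b2; split; rewrite ?hb ?h1 ?h2 //.
  by rewrite setOCU setOCI; apply: eq_setOC => z; move: (notSQ z); set_tauto.
case=> b [b1 [b2 [/and3P[hb h1 h2] eqS sb ->]]].
exists (setOC b set0 :|: setOC (Q :\: b1) (b2 :&: Q)).
  apply/imset2P; exists (setOC b set0) (setOC (Q :\: b1) (b2 :&: Q)) => //.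
    by apply/imsetP; exists b.
  rewrite inE disjoint_setOC_orig disjoint_setD sb andbT.
  by apply/imset2P; exists b1 b2; rewrite // inE h2 eqS /=.
by rewrite setOCU setOCI; apply: eq_setOC => z; move: (notSQ z) (base_memSQ z hb); set_tauto.
Qed.

Lemma ground_L : ground L = setOC S Q.
Proof.
rewrite link_ground ground_MSQ ground_MQQ' !setOCD setOCU.
by apply: eq_setOC => z; move: (notSQ z); set_tauto.
Qed.

Lemma shrink_trace_vee_MSQ_MQQ' b b1 b2 :
  b \in BM -> b1 \in BM -> b2 \in BM -> b1 :&: S = b2 :&: S -> b :&: Q \subset b1 ->
  ~~ (b1 :&: Q \subset b) ->
  exists2 Y, Y \in traces (vee MSQ MQQ') (setOC S Q) & Y \proper setOC (b :&: S) (b2 :&: Q).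
Proof.
move=> hb h1 h2 eqS sb /subsetPn[x]; rewrite inE => /andP[xb1 xQ] xb.
have [|y] := base_coexchange matroidM hb h1 (x := x); first by rewrite inE xb1 xb.
rewrite inE => /andP[yb1 yb] hb'.
have yS : y \in S.
  have := implyP (base_memSQ y hb) yb.
  by move: (subset_imply y sb) yb1 yb; set_tauto.
exists (setOC (((b :\ y) :|: [set x]) :&: S) (b2 :&: Q)).
  apply/traces_vee_MSQ_MQQ'P; exists ((b :\ y) :|: [set x]), b1, b2.
  split; rewrite ?hb' ?h1 ?h2 //.
  by apply/subsetP => z; move: (subset_imply z sb) xb1; set_tauto.
apply/properP; split.
  by rewrite subset_setOC subxx andbT; apply/subsetP => z; move: (notSQ x) xQ; set_tauto.
by exists (y, false); rewrite !in_setOC; move: yS yb xb; set_tauto.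
Qed.

Lemma card_trace_vee_MSQ_MQQ' b X :
  b \in BM -> X \in traces (vee MSQ MQQ') (setOC S Q) -> #|b| <= #|X|.
Proof.
move=> hb /traces_vee_MSQ_MQQ'P[a [a1 [a2 [/and3P[ha g1 g2] eqS sa ->]]]].
have : #|a :&: Q| <= #|a1 :&: Q| by apply: subset_leq_card; rewrite subsetI sa subsetIr.
have := card_baseSQ ha; have := card_baseSQ g1; have := card_baseSQ g2.
have := card_bases matroidM hb ha; have := card_bases matroidM hb g1.
have := card_bases matroidM hb g2.
by rewrite card_setOC eqS; lia.
Qed.

Lemma card_setOC_cross b b2 : b \in BM -> b2 \in BM -> (b2 :&: S) :|: (b :&: Q) \in BM ->
  #|setOC (b :&: S) (b2 :&: Q)| = #|b|.
Proof.
move=> hb h2 h1; have := card_baseSQ h1.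
have -> : ((b2 :&: S) :|: (b :&: Q)) :&: S = b2 :&: S.
  by apply/setP => z; move: (notSQ z); set_tauto.
have -> : ((b2 :&: S) :|: (b :&: Q)) :&: Q = b :&: Q.
  by apply/setP => z; move: (notSQ z); set_tauto.
have := card_baseSQ hb; have := card_baseSQ h2.
have := card_bases matroidM hb h2; have := card_bases matroidM hb h1.
by rewrite card_setOC; lia.
Qed.

Lemma bases_L : bases L =
  [set setOC (b :&: S) (b2 :&: Q) | b in BM, b2 in BM & (b2 :&: S) :|: (b :&: Q) \in BM].
Proof.
rewrite link_bases -link_ground ground_L; apply/setP => X; rewrite inE.
apply: minset_by_card => {}X.
- case/imset2P=> b b2 hb; rewrite inE => /andP[h2 h1] ->.
  apply/traces_vee_MSQ_MQQ'P; exists b, ((b2 :&: S) :|: (b :&: Q)), b2.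
  split; rewrite ?hb ?h1 ?h2 ?subsetUr //.
  by apply/setP => z; move: (notSQ z); set_tauto.
- case/traces_vee_MSQ_MQQ'P=> b [b1 [b2 [/and3P[hb h1 h2] eqS sb ->]]] not_good.
  apply: (shrink_trace_vee_MSQ_MQQ' hb h1 h2 eqS sb); apply: contra not_good => sb'.
  apply: imset2_f => //; rewrite inE h2.
  suff -> : (b2 :&: S) :|: (b :&: Q) = b1 by [].
  apply/setP => z; move/setP/(_ z): eqS; move: (subset_imply z sb) (subset_imply z sb').
  by move: (notSQ z) (base_memSQ z h1); set_tauto.
- move=> Y /imset2P[b b2 hb]; rewrite inE => /andP[h2 h1] ->.
  by rewrite card_setOC_cross //; apply: card_trace_vee_MSQ_MQQ'.
Qed.

Lemma dual_MQQ' : dual MQQ' = rename (toggle Q) MQQ'.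
Proof.
have swap b1 b2 :
    setOC Q Q :\: setOC (Q :\: b1) (b2 :&: Q) = toggle Q @: setOC (Q :\: b2) (b1 :&: Q).
  by rewrite setOCD toggle_setOC; apply: eq_setOC => z; set_tauto.
have mem_swap b1 b2 : b1 \in BM -> b2 \in BM -> b1 :&: S == b2 :&: S ->
    setOC (Q :\: b2) (b1 :&: Q) \in bases MQQ'.
  by move=> h1 h2 eqS; rewrite bases_MQQ'; apply/imset2P; exists b2 b1; rewrite // inE h1 eq_sym.
apply: matroid_eq.
  rewrite rename_ground dual_ground ground_MQQ' toggle_setOC.
  by apply: eq_setOC => z; set_tauto.
rewrite rename_bases dual_bases ground_MQQ'; apply/setP => X.
apply/imsetP/imsetP => -[c hc ->]; rewrite bases_MQQ' in hc;
  case/imset2P: hc => b1 b2 h1; rewrite inE => /andP[h2 eqS] ->;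
  by exists (setOC (Q :\: b2) (b1 :&: Q)); rewrite ?swap ?mem_swap.
Qed.

Lemma minors_MQQ'_Q : restrict MQQ' (setOC Q set0) = restrict (dual MSQ) (setOC Q set0) /\
                      contract MQQ' (setOC Q set0) = contract (dual MSQ) (setOC Q set0).
Proof.
apply: eq_minors.
  rewrite ground_MQQ' dual_ground ground_MSQ !setOCI.
  by apply: eq_setOC => z; set_tauto.
rewrite /traces bases_MQQ' bases_dual_MSQ; apply/setP => X.
apply/imsetP/imsetP => [[_ /imset2P[b1 b2 h1 _ ->] ->]|[_ /imsetP[b hb ->] ->]].
  exists (setOC (G :\: b1) set0); first by apply/imsetP; exists b1.
  by rewrite !setOCI; apply: eq_setOC => z; set_tauto.
exists (setOC (Q :\: b) (b :&: Q)); first by apply/imset2P; exists b b; rewrite // inE hb eqxx.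
by rewrite !setOCI; apply: eq_setOC => z; set_tauto.
Qed.

Lemma minors_L_S : restrict L (setOC S set0) = restrict MSQ (setOC S set0) /\
                   contract L (setOC S set0) = contract MSQ (setOC S set0).
Proof.
apply: eq_minors; first by rewrite ground_L ground_MSQ !setOCI; apply: eq_setOC => z; set_tauto.
rewrite /traces bases_L bases_MSQ; apply/setP => X.
apply/imsetP/imsetP => [[_ /imset2P[b b2 hb _ ->] ->]|[_ /imsetP[b hb ->] ->]].
  exists (setOC b set0); first by apply/imsetP; exists b.
  by rewrite !setOCI; apply: eq_setOC => z; set_tauto.
exists (setOC (b :&: S) (b :&: Q)).
  by apply/imset2P; exists b b; rewrite // inE hb base_splitSQ.
by rewrite !setOCI; apply: eq_setOC => z; set_tauto.
Qed.

Lemma minors_L_Q' :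
  restrict L (setOC set0 Q) = rename (toggle Q) (restrict MSQ (setOC Q set0)) /\
  contract L (setOC set0 Q) = rename (toggle Q) (contract MSQ (setOC Q set0)).
Proof.
have -> : setOC set0 Q = toggle Q @: setOC Q set0.
  by rewrite toggle_setOC; apply: eq_setOC => z; set_tauto.
rewrite rename_restrict ?rename_contract; try exact: toggleK.
apply: eq_minors.
  by rewrite ground_L ground_MSQ' toggle_setOC !setOCI; apply: eq_setOC => z; set_tauto.
rewrite toggle_setOC /traces bases_L bases_MSQ'; apply/setP => X.
apply/imsetP/imsetP => [[_ /imset2P[b b2 hb hb2 ->] ->]|[_ /imsetP[b hb ->] ->]].
  move: hb2; rewrite inE => /andP[h2 _].
  exists (setOC (b2 :&: S) (b2 :&: Q)); first by apply/imsetP; exists b2.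
  by rewrite !setOCI; apply: eq_setOC => z; set_tauto.
exists (setOC (b :&: S) (b :&: Q)).
  by apply/imset2P; exists b b; rewrite // inE hb base_splitSQ.
by rewrite !setOCI; apply: eq_setOC => z; set_tauto.
Qed.

Lemma bases_MSQ'_sub_L b : b \in bases MSQ' -> b \in bases L.
Proof.
rewrite bases_MSQ' bases_L => /imsetP[b0 hb ->].
by apply/imset2P; exists b0 b0; rewrite // inE hb base_splitSQ.
Qed.

Lemma bases_rename_L : bases (rename (toggle Q) L) =
  [set setOC ((b :&: S) :|: (b2 :&: Q)) set0 | b in BM, b2 in BM & (b2 :&: S) :|: (b :&: Q) \in BM].
Proof.
rewrite rename_bases bases_L; apply/setP => X.
apply/imsetP/imset2P => [[_ /imset2P[b b2 hb hb2 ->] ->]|[b b2 hb hb2 ->]].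
  exists b b2; rewrite // toggle_setOC.
  by apply: eq_setOC => z; move: (notSQ z); set_tauto.
exists (setOC (b :&: S) (b2 :&: Q)); first by apply/imset2P; exists b b2.
by rewrite toggle_setOC; apply: eq_setOC => z; move: (notSQ z); set_tauto.
Qed.

Lemma completion_MSQ :
  completion MSQ (setOC S set0) (setOC Q set0) = bases (rename (toggle Q) L).
Proof.
rewrite bases_rename_L; apply/setP => c; rewrite /completion !inE.
apply/orP/imset2P => [[hc|]|[b b2 hb]].
- move: (hc); rewrite bases_MSQ => /imsetP[b hb ->].
  by exists b b; rewrite ?inE ?hb ?base_splitSQ.
- case/existsP=> HS /existsP[HQ /existsP[BS /existsP[BQ]]].
  case/and5P=> /subset_setOC_orig[hS shS ->] /subset_setOC_orig[hQ shQ ->].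
  move=> /subset_setOC_orig[bS sbS ->] /subset_setOC_orig[bQ sbQ ->].
  rewrite !setOCU !setU0 !mem_bases_MSQ => /and5P[/eqP-> _ hbase hbase1 hbase2].
  exists (hS :|: bQ) (bS :|: hQ) => //.
    rewrite inE hbase2; suff -> : ((bS :|: hQ) :&: S) :|: ((hS :|: bQ) :&: Q) = bS :|: bQ by [].
    apply/setP => z; move: (notSQ z) (subset_imply z shS) (subset_imply z shQ).
    by move: (subset_imply z sbS) (subset_imply z sbQ); set_tauto.
  apply: eq_setOC => // z; move: (notSQ z) (subset_imply z shS) (subset_imply z shQ).
  by move: (subset_imply z sbS) (subset_imply z sbQ); set_tauto.
rewrite inE => /andP[hb2 hb1] ->.
have [|not_base] := boolP (setOC ((b :&: S) :|: (b2 :&: Q)) set0 \in bases MSQ);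
  [by left | right].
apply/existsP; exists (setOC (b :&: S) set0); apply/existsP; exists (setOC (b2 :&: Q) set0).
apply/existsP; exists (setOC (b2 :&: S) set0); apply/existsP; exists (setOC (b :&: Q) set0).
rewrite !subset_setOC !subsetIr !sub0set !setOCU !setU0 eqxx !mem_bases_MSQ.
by rewrite (base_splitSQ hb) (base_splitSQ hb2) hb hb1 hb2.
Qed.

Lemma rename_L_link : rename (toggle Q) L =
  link MSQ' (link (rename (toggle (S :|: Q)) (dual MSQ)) (rename (toggle S) MSQ)).
Proof.
have -> : rename (toggle S) MSQ = rename (toggle G) MSQ'.
  rewrite rename_comp; apply: eq_rename => -[x c]; rewrite /toggle /= !inE.
  by move: (notSQ x); case xS: (x \in S); case xQ: (x \in Q); rewrite /= ?xS ?xQ /= ?negbK.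
have toggle_GQ : rename (toggle G) MQQ' = rename (toggle Q) MQQ'.
  apply: eq_in_rename => [[x c]|d].
    rewrite ground_MQQ' in_setOC /toggle /= inE => xQ.
    by rewrite (_ : x \in Q) ?orbT //; case: c xQ.
  rewrite bases_MQQ' ground_MQQ' => /imset2P[b1 b2 _ _ ->].
  by rewrite subset_setOC subsetDl subsetIr.
by rewrite -(rename_link (toggleK G)) toggle_GQ (rename_link (toggleK Q)).
Qed.

End Linking.

Section CompletionDuality.
Variables (V : finType) (S0 Q0 : {set V}) (N : matroid V).
Hypotheses (disjSQ0 : [disjoint S0 & Q0]) (groundN : ground N = S0 :|: Q0)
  (basesN : forall b, b \in bases N -> b \subset S0 :|: Q0).
Local Notation notSQ0 := (disjoint_andF disjSQ0).

Lemma completion_sub (c : {set V}) : c \in completion N S0 Q0 -> c \subset S0 :|: Q0.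
Proof.
rewrite !inE => /orP[/basesN //|/existsP[hS /existsP[hQ /existsP[bS /existsP[bQ]]]]].
case/and5P=> shS shQ _ _ /andP[/eqP-> _].
by apply/subsetP => z; move: (subset_imply z shS) (subset_imply z shQ); set_tauto.
Qed.

Lemma mem_dual_compl (b : {set V}) : b \subset S0 :|: Q0 ->
  ((S0 :|: Q0) :\: b \in bases (dual N)) = (b \in bases N).
Proof.
move=> sb; rewrite dual_bases groundN; apply/imsetP/idP => [[b' hb' eb]|]; last by exists b.
suff -> : b = b' by [].
apply/setP => z; move/setP/(_ z): eb; move: (subset_imply z sb) (subset_imply z (basesN hb')).
by set_tauto.
Qed.

Lemma completion_compl (c : {set V}) : c \in completion N S0 Q0 ->
  (S0 :|: Q0) :\: c \in completion (dual N) S0 Q0.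
Proof.
move=> hc; have sc := completion_sub hc; move: hc; rewrite !inE.
case/orP=> [hb|]; first by rewrite mem_dual_compl // hb.
case/existsP=> hS /existsP[hQ /existsP[bS /existsP[bQ]]].
case/and5P=> shS shQ sbS sbQ /and5P[/eqP ec not_base hbase hbase1 hbase2].
have complU (A B : {set V}) : A \subset S0 -> B \subset Q0 ->
    (S0 :\: A) :|: (Q0 :\: B) = (S0 :|: Q0) :\: (A :|: B).
  move=> sA sB; apply/setP => z; move: (subset_imply z sA) (subset_imply z sB) (notSQ0 z).
  by set_tauto.
apply/orP; right; apply/existsP; exists (S0 :\: hS); apply/existsP; exists (Q0 :\: hQ).
apply/existsP; exists (S0 :\: bS); apply/existsP; exists (Q0 :\: bQ).
rewrite !subsetDl ec !complU // eqxx !mem_dual_compl ?setUSS // -ec not_base.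
by rewrite hbase hbase1 hbase2.
Qed.

End CompletionDuality.

Lemma dual_completion (V : finType) (S0 Q0 : {set V}) (N : matroid V) :
  [disjoint S0 & Q0] -> ground N = S0 :|: Q0 ->
  (forall b, b \in bases N -> b \subset S0 :|: Q0) ->
  dual (Matroid (S0 :|: Q0) (completion N S0 Q0)) =
  Matroid (S0 :|: Q0) (completion (dual N) S0 Q0).
Proof.
move=> disjSQ0 groundN basesN.
have complK (X : {set V}) : X \subset S0 :|: Q0 -> (S0 :|: Q0) :\: ((S0 :|: Q0) :\: X) = X.
  by move=> sX; rewrite setDDr setDv set0U (setIidPr sX).
have basesN' b : b \in bases (dual N) -> b \subset S0 :|: Q0.
  by rewrite dual_bases groundN => /imsetP[b' _ ->]; apply: subsetDl.
have dualK : dual (dual N) = N.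
  apply: matroid_eq; rewrite // !dual_bases dual_ground groundN; apply/setP => b.
  apply/imsetP/idP => [[_ /imsetP[b' hb' ->] ->]|hb]; first by rewrite complK ?basesN.
  by exists ((S0 :|: Q0) :\: b); rewrite ?imset_f // complK ?basesN.
apply: matroid_eq; rewrite // dual_bases; apply/setP => X.
apply/imsetP/idP => [[c hc ->]|hX]; first exact: completion_compl.
exists ((S0 :|: Q0) :\: X); last by rewrite complK // (completion_sub basesN' hX).
by rewrite -[N]dualK completion_compl.
Qed.

Theorem theorem11 (T : finType) (S Q : {set T}) (M : matroid T) :
  [disjoint S & Q] ->
  ground M = S :|: Q ->
  is_matroid M ->
  let S0 := (@orig T) @: S in let Q0 := (@orig T) @: Q in
  let Q1 := (@copy T) @: Q in
  (* M_SQ on S (+) Q *)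
  let MSQ := embed_orig M in
  (* (M_SQ)_{SQ'} *)
  let MSQ' := rename (toggle Q) MSQ in
  (* M_QQ' := M_SQ^* <-> (M_SQ)_{SQ'} *)
  let MQQ' := link (dual MSQ) MSQ' in
  let L := link MSQ MQQ' in
  (* 1 *) dual MQQ' = rename (toggle Q) MQQ' /\
      (* 2 *) (restrict MQQ' Q0 = restrict (dual MSQ) Q0 /\
              contract MQQ' Q0 = contract (dual MSQ) Q0) /\
      (* 3 *) (restrict L S0 = restrict MSQ S0 /\
              restrict L Q1 = rename (toggle Q) (restrict MSQ Q0)) /\
      (* 4 *) (contract L S0 = contract MSQ S0 /\
              contract L Q1 = rename (toggle Q) (contract MSQ Q0)) /\
      (* 5 *) (forall b, b \in bases MSQ' -> b \in bases L) /\
      (* 6 *) (completion MSQ S0 Q0 = bases (rename (toggle Q) L) /\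
              rename (toggle Q) L =
                link MSQ' (link (rename (toggle (S :|: Q)) (dual MSQ))
                                (rename (toggle S) MSQ))) /\
      (* 7 *) dual (Matroid (S0 :|: Q0) (completion MSQ S0 Q0)) =
              Matroid (S0 :|: Q0) (completion (dual MSQ) S0 Q0).
Proof.
move=> disjSQ groundM matroidM; cbv zeta; rewrite !setOC_orig setOC_copy.
have [restrict_L_S contract_L_S] := minors_L_S disjSQ groundM matroidM.
have [restrict_L_Q' contract_L_Q'] := minors_L_Q' disjSQ groundM matroidM.
split; first exact: dual_MQQ' disjSQ groundM matroidM.
split; first exact: minors_MQQ'_Q disjSQ groundM matroidM.
split; first by split.
split; first by split.
split; first exact: bases_MSQ'_sub_L disjSQ groundM matroidM.
split; first by split; [apply: completion_MSQ | apply: rename_L_link].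
apply: dual_completion; first by rewrite disjoint_setOC_orig.
  by rewrite (ground_MSQ groundM) setOCU setU0.
move=> b; rewrite (bases_MSQ M) setOCU setU0 => /imsetP[b0 /(base_sub groundM matroidM) sb0 ->].
by rewrite subset_setOC sb0 sub0set.
Qed.
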